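(* Each of $r_0$ and $r_1$ has a unique fixed point in $[0,1]$, denoted $\eta_0$ and $\eta_1$ respectively, and each is a global attractor of the corresponding dynamical system on $[0,1]$: $r_i^k(z)\to\eta_i$ as $k\to\infty$ for every $z\in[0,1]$, $i\in\{0,1\}$.
   Context: Parameters $a,b,p,q\in(0,1)$ with $a+b\ne1$. $\alpha_0(z)=(1-p)(a+b-1)z+1-b+pb$, $\alpha_1(z)=(1-q)(1-a-b)z+b+q-bq$, $r_0(z)=\frac{(a+b-1)z+1-b}{\alpha_0(z)}$, $r_1(z)=\frac{q(a+b-1)z+q-qb}{\alpha_1(z)}$; these map $[0,1]$ into $[0,1]$. *)

From Stdlib Require Import Reals.
Open Scope R_scope.

Definition alpha0 (a b p : R) (z : R) : R := (1 - p) * (a + b - 1) * z + 1 - b + p * b.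
Definition alpha1 (a b q : R) (z : R) : R := (1 - q) * (1 - a - b) * z + b + q - b * q.

Definition r0 (a b p : R) (z : R) : R := ((a + b - 1) * z + 1 - b) / alpha0 a b p z.
Definition r1 (a b q : R) (z : R) : R := (q * (a + b - 1) * z + q - q * b) / alpha1 a b q z.

Fixpoint iterR (k : nat) (f : R -> R) (z : R) : R :=
  match k with
  | O => z
  | S k' => f (iterR k' f z)
  end.

Definition unique_attracting_fixpoint (f : R -> R) : Prop :=
  exists eta : R,
    (0 <= eta <= 1 /\ f eta = eta) /\
    (forall y : R, 0 <= y <= 1 -> f y = y -> y = eta) /\
    (forall z : R, 0 <= z <= 1 -> Un_cv (fun k => iterR k f z) eta).

(* Both maps are Moebius maps f z = (A z + B) / (C z + D) whose denominator is positive
   on [0,1] and which send [0,1] into (0,1); the intermediate value theorem gives a fixed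
   point eta.  For a Moebius map, den z * den (f z) is again affine in z, so
   f (f z) - eta = G z * (z - eta) with G z = (A D - B C)^2 / (den z den (f z) den eta^2)
   monotone in z.  Its maximum is at an endpoint, where G < 1 because f (f 0) > 0 and
   f (f 1) < 1.  Hence f o f contracts towards eta, which gives both uniqueness of eta
   and convergence of every orbit. *)

From Stdlib Require Import Reals.
From Stdlib Require Import Lra Lia Ranalysis5 FunctionalExtensionality.
Open Scope R_scope.

Lemma iterR_Sr (f : R -> R) n z : iterR (S n) f z = iterR n f (f z).
Proof.
  induction n as [|n IH]; [reflexivity|].
  cbn [iterR] in *. now rewrite IH.
Qed.

Lemma iterR_01 (f : R -> R) :
  (forall z, 0 <= z <= 1 -> 0 <= f z <= 1) ->
  forall n z, 0 <= z <= 1 -> 0 <= iterR n f z <= 1.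
Proof. intros Hf n z Hz; induction n as [|n IH]; simpl; auto. Qed.

Lemma affine_pos_01 (u v z : R) : 0 < v -> 0 < u + v -> 0 <= z <= 1 -> 0 < u * z + v.
Proof.
  intros Hv Huv Hz.
  replace (u * z + v) with ((1 - z) * v + z * (u + v)) by ring.
  destruct (Req_dec z 1) as [->|Hz1]; [lra|].
  assert (0 < (1 - z) * v) by (apply Rmult_lt_0_compat; lra).
  assert (0 <= z * (u + v)) by (apply Rmult_le_pos; lra).
  lra.
Qed.

Lemma affine_ge_min_01 (u v z : R) : 0 <= z <= 1 -> Rmin v (u + v) <= u * z + v.
Proof.
  intros Hz. destruct (Rle_dec 0 u).
  - apply Rle_trans with v; [apply Rmin_l|nra].
  - apply Rle_trans with (u + v); [apply Rmin_r|nra].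
Qed.

Lemma ratio_01 (n d : R) : 0 < n -> n < d -> 0 < n / d < 1.
Proof.
  intros Hn Hd. split; [apply Rdiv_lt_0_compat; lra|].
  apply Rmult_lt_reg_r with d; [lra|]. field_simplify; lra.
Qed.

Lemma fixpoint_01 (f : R -> R) :
  (forall z, 0 <= z <= 1 -> continuity_pt f z) ->
  (forall z, 0 <= z <= 1 -> 0 < f z < 1) ->
  exists eta, 0 <= eta <= 1 /\ f eta = eta.
Proof.
  intros Hcont Hf.
  destruct (IVT_interv (fun z => z - f z) 0 1) as [eta [Heta Hzero]].
  - intros z Hz. apply continuity_pt_minus; [|auto].
    apply derivable_continuous_pt, derivable_pt_id.
  - lra.
  - pose proof (Hf 0); lra.
  - pose proof (Hf 1); lra.
  - exists eta. lra.
Qed.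

Lemma unique_attracting_fixpoint_of_contraction2 (f : R -> R) (eta L : R) :
  (forall z, 0 <= z <= 1 -> 0 <= f z <= 1) ->
  0 <= eta <= 1 -> f eta = eta -> 0 <= L < 1 ->
  (forall z, 0 <= z <= 1 -> Rabs (f (f z) - eta) <= L * Rabs (z - eta)) ->
  unique_attracting_fixpoint f.
Proof.
  intros Hf Heta Hfix HL Hcontr.
  assert (Hdist : forall z, 0 <= z <= 1 -> Rabs (z - eta) <= 1)
    by (intros z Hz; apply Rabs_le; lra).
  assert (Heven : forall n z, 0 <= z <= 1 -> Rabs (iterR (2 * n) f z - eta) <= L ^ n).
  { induction n as [|n IH]; intros z Hz; [now apply Hdist|].
    replace (2 * S n)%nat with (S (S (2 * n))) by lia.
    cbn [iterR].
    apply Rle_trans with (L * Rabs (iterR (2 * n) f z - eta)).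
    - apply Hcontr, iterR_01; auto.
    - apply Rmult_le_compat_l; [lra|auto]. }
  exists eta. split; [auto|split].
  - intros y Hy Hfy.
    pose proof (Hcontr y Hy) as Hy'. rewrite !Hfy in Hy'.
    destruct (Req_dec y eta) as [|Hne]; [assumption|exfalso].
    pose proof (Rabs_pos_lt (y - eta) ltac:(lra)). nra.
  - intros z Hz eps Heps.
    destruct (pow_lt_1_zero L ltac:(rewrite Rabs_right; lra) eps Heps) as [M HM].
    exists (2 * M)%nat. intros n Hn. unfold Rdist.
    assert (HLm : forall m, (M <= m)%nat -> L ^ m < eps)
      by (intros m Hm; eapply Rle_lt_trans; [apply Rle_abs|now apply HM]).
    destruct (Nat.Even_or_Odd n) as [[m ->]|[m ->]].
    + eapply Rle_lt_trans; [apply Heven, Hz|apply HLm; lia].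
    + rewrite Nat.add_1_r, iterR_Sr.
      eapply Rle_lt_trans; [apply Heven, Hf, Hz|apply HLm; lia].
Qed.

Definition moebius (A B C D : R) (z : R) : R := (A * z + B) / (C * z + D).

Section Moebius01.

Variables A B C D : R.
Hypothesis HD : 0 < D.
Hypothesis HCD : 0 < C + D.

Let f := moebius A B C D.
Let den z := C * z + D.

Hypothesis f_01 : forall z, 0 <= z <= 1 -> 0 < f z < 1.

Lemma moebius_den_pos z : 0 <= z <= 1 -> 0 < den z.
Proof. intros; now apply affine_pos_01. Qed.

Lemma moebius_sub z w : 0 <= z <= 1 -> 0 <= w <= 1 ->
  f z - f w = (A * D - B * C) * (z - w) / (den z * den w).
Proof.
  intros Hz Hw. pose proof (moebius_den_pos z Hz); pose proof (moebius_den_pos w Hw).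
  unfold f, moebius, den in *. field; lra.
Qed.

Lemma moebius_den_comp z : 0 <= z <= 1 ->
  den z * den (f z) = C * (A + D) * z + (C * B + D * D).
Proof.
  intros Hz. pose proof (moebius_den_pos z Hz).
  unfold f, moebius, den in *. field; lra.
Qed.

Lemma moebius_den_comp_pos z : 0 <= z <= 1 -> 0 < den z * den (f z).
Proof.
  intros Hz. pose proof (f_01 z Hz).
  apply Rmult_lt_0_compat; apply moebius_den_pos; lra.
Qed.

Lemma moebius2_sub z w : 0 <= z <= 1 -> 0 <= w <= 1 ->
  f (f z) - f (f w) = (A * D - B * C) ^ 2 * (z - w)
                      / (den z * den (f z) * (den w * den (f w))).
Proof.
  intros Hz Hw. pose proof (f_01 z Hz); pose proof (f_01 w Hw).
  rewrite moebius_sub, moebius_sub by lra.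
  pose proof (moebius_den_pos z Hz); pose proof (moebius_den_pos w Hw).
  pose proof (moebius_den_pos (f z) ltac:(lra)).
  pose proof (moebius_den_pos (f w) ltac:(lra)).
  field; repeat split; lra.
Qed.

Lemma moebius_continuous z : 0 <= z <= 1 -> continuity_pt f z.
Proof.
  intros Hz. pose proof (moebius_den_pos z Hz).
  unfold f, moebius, den in *. reg. lra.
Qed.

Lemma moebius2_contraction eta : 0 <= eta <= 1 -> f eta = eta ->
  exists L, 0 <= L < 1 /\
    forall z, 0 <= z <= 1 -> Rabs (f (f z) - eta) <= L * Rabs (z - eta).
Proof.
  intros Heta Hfix.
  set (N z := den z * den (f z)).
  set (G z := (A * D - B * C) ^ 2 / (N z * N eta)).
  assert (HN : forall z, 0 <= z <= 1 -> 0 < N z) by exact moebius_den_comp_pos.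
  assert (HG : forall z, 0 <= z <= 1 -> f (f z) - eta = G z * (z - eta)).
  { intros z Hz. replace (f (f z) - eta) with (f (f z) - f (f eta)) by now rewrite !Hfix.
    rewrite moebius2_sub by auto.
    unfold G, N, Rdiv. ring. }
  assert (HG_end : forall e, 0 <= e <= 1 -> 0 < (f (f e) - e) * (eta - e) ->
                             G e < 1).
  { intros e He Hsign.
    assert (E : (f (f e) - e) * (eta - e) = (1 - G e) * (eta - e) ^ 2).
    { replace (f (f e) - e) with (f (f e) - eta + (eta - e)) by ring.
      rewrite HG by exact He. ring. }
    pose proof (pow2_ge_0 (eta - e)). nra. }
  pose proof (f_01 eta Heta) as Hfeta; rewrite Hfix in Hfeta.
  assert (HG0 : G 0 < 1).
  { apply HG_end; [lra|]. pose proof (f_01 0); pose proof (f_01 (f 0)).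
    apply Rmult_lt_0_compat; lra. }
  assert (HG1 : G 1 < 1).
  { apply HG_end; [lra|]. pose proof (f_01 1); pose proof (f_01 (f 1)).
    replace ((f (f 1) - 1) * (eta - 1)) with ((1 - f (f 1)) * (1 - eta)) by ring.
    apply Rmult_lt_0_compat; lra. }
  set (Nmin := Rmin (N 0) (N 1)).
  assert (HNmin : forall z, 0 <= z <= 1 -> Nmin <= N z).
  { intros z Hz. unfold Nmin, N. rewrite !moebius_den_comp by lra.
    replace (C * (A + D) * 0 + (C * B + D * D)) with (C * B + D * D) by ring.
    replace (C * (A + D) * 1 + (C * B + D * D))
      with (C * (A + D) + (C * B + D * D)) by ring.
    now apply affine_ge_min_01. }
  assert (Hmin_pos : 0 < Nmin) by (unfold Nmin; apply Rmin_case; apply HN; lra).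
  pose proof (HN eta Heta).
  exists ((A * D - B * C) ^ 2 / (Nmin * N eta)). split; [split|].
  - apply Rle_mult_inv_pos; [apply pow2_ge_0|nra].
  - unfold Nmin; apply Rmin_case; [exact HG0|exact HG1].
  - intros z Hz. rewrite HG, Rabs_mult by auto.
    apply Rmult_le_compat_r; [apply Rabs_pos|].
    pose proof (HNmin z Hz); pose proof (HN z Hz).
    rewrite Rabs_right by (apply Rle_ge, Rle_mult_inv_pos; [apply pow2_ge_0|nra]).
    apply Rmult_le_compat_l; [apply pow2_ge_0|].
    apply Rinv_le_contravar; [nra|]. apply Rmult_le_compat_r; lra.
Qed.

Lemma moebius_unique_attracting_fixpoint : unique_attracting_fixpoint f.
Proof.
  destruct (fixpoint_01 f moebius_continuous f_01) as [eta [Heta Hfix]].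
  destruct (moebius2_contraction eta Heta Hfix) as [L [HL Hcontr]].
  apply (unique_attracting_fixpoint_of_contraction2 f eta L); auto.
  intros z Hz; pose proof (f_01 z Hz); lra.
Qed.

End Moebius01.

Theorem lemma2p31 (a b p q : R)
  (ha : 0 < a < 1) (hb : 0 < b < 1) (hp : 0 < p < 1) (hq : 0 < q < 1)
  (hab : a + b <> 1) :
  unique_attracting_fixpoint (r0 a b p) /\ unique_attracting_fixpoint (r1 a b q).
Proof.
  (* each denominator is the numerator plus an affine term positive on [0,1] *)
  split.
  - replace (r0 a b p)
      with (moebius (a + b - 1) (1 - b) ((1 - p) * (a + b - 1)) (1 - b + p * b))
      by (extensionality z; unfold r0, alpha0, moebius; f_equal; ring).
    apply moebius_unique_attracting_fixpoint; [nra|nra|].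
    intros z Hz. unfold moebius.
    pose proof (affine_pos_01 (a + b - 1) (1 - b) z ltac:(lra) ltac:(lra) Hz).
    pose proof (affine_pos_01 (- p * (a + b - 1)) (p * b) z ltac:(nra) ltac:(nra) Hz).
    apply ratio_01; nra.
  - replace (r1 a b q)
      with (moebius (q * (a + b - 1)) (q - q * b) ((1 - q) * (1 - a - b)) (b + q - b * q))
      by (extensionality z; unfold r1, alpha1, moebius; f_equal; ring).
    apply moebius_unique_attracting_fixpoint; [nra|nra|].
    intros z Hz. unfold moebius.
    pose proof (affine_pos_01 (q * (a + b - 1)) (q - q * b) z ltac:(nra) ltac:(nra) Hz).
    pose proof (affine_pos_01 (1 - a - b) b z ltac:(lra) ltac:(lra) Hz).
    apply ratio_01; nra.
Qed.
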